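(* Let $\alpha,\beta,\theta$ be cost functions of class $C^1$ with $\alpha+\beta=\theta$, and assume $\theta$ is strictly convex. Let $f:\mathbb{R}\to\mathbb{R}$ be a convex function of class $C^1$ that is bounded from below. Then there exist convex functions $f_1,f_2:\mathbb{R}\to\mathbb{R}$ of class $C^1$ with the following properties: - $f=f_1+f_2$; - for all $t>0$, $Q_t^\theta f=Q_t^\alpha f_1+Q_t^\beta f_2$; - on the set $I=\{x\in\mathbb{R}: f'(x)\in\theta'(\mathbb{R})\}$, one has $f_1'=\alpha'\circ(\theta')^{-1}\circ f'$. Concretely, $f_1$ can be taken as $f_1(x)=a+\int_{x_0}^x\alpha'\circ(\theta')^{-1}\circ f'(u)\,du$ on $I$ for a point $x_0\in I$ and any constant $a$, extended affinely outside $I$.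
   Context: A cost function is an even convex function $\theta:\mathbb{R}\to[0,\infty)$ with $\theta(0)=0$. For $t>0$ and $f:\mathbb{R}\to\mathbb{R}$, the Hopf–Lax operator is $$Q_t^\theta f(x)=\inf_{y\in\mathbb{R}}\Big\{f(y)+t\,\theta\Big(\frac{y-x}{t}\Big)\Big\}.$$ For strictly convex $\theta\in C^1$, $(\theta')^{-1}:\theta'(\mathbb{R})\to\mathbb{R}$ denotes the inverse of the strictly increasing map $\theta'$. *)

From Stdlib Require Import Reals.
Open Scope R_scope.

Definition convex (f : R -> R) : Prop :=
  forall x y l, 0 <= l <= 1 ->
    f (l * x + (1 - l) * y) <= l * f x + (1 - l) * f y.

Definition strictly_convex (f : R -> R) : Prop :=
  forall x y l, x <> y -> 0 < l < 1 ->
    f (l * x + (1 - l) * y) < l * f x + (1 - l) * f y.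

Definition cost_function (th : R -> R) : Prop :=
  (forall x, th (- x) = th x) /\ convex th /\
  (forall x, 0 <= th x) /\ th 0 = 0.

Definition C1_with (f df : R -> R) : Prop :=
  (forall x, derivable_pt_lim f x (df x)) /\ continuity df.

Definition bounded_below (f : R -> R) : Prop :=
  exists m, forall x, m <= f x.

Definition is_inf (E : R -> Prop) (m : R) : Prop :=
  (forall v, E v -> m <= v) /\
  (forall m', (forall v, E v -> m' <= v) -> m' <= m).

(* Q_t^th f (x) = m, i.e. inf_y { f y + t th((y-x)/t) } = m (finite) *)
Definition hopf_lax_is (th : R -> R) (t : R) (f : R -> R) (x m : R) : Prop :=
  is_inf (fun v => exists y, v = f y + t * th ((y - x) / t)) m.

From Stdlib Require Import Reals Lra Psatz.
From Coquelicot Require Import Coquelicot.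
Open Scope R_scope.

(* Let [phi v := sup_s min (da s) (v - db s)]; then [phi] and [v - phi v] are nondecreasing and
   [phi (dth s) = da s].  Take [f1' = phi o f'] and [f2 = f - f1]: both derivatives are
   nondecreasing, so [f1] and [f2] are convex.  For [t > 0], coercivity gives a critical point [y]
   of [y |-> f y + t th ((y - x) / t)], i.e. [f' y = th' s] with [s = (x - y) / t].  Then
   [f1' y = al' s] and [f2' y = be' s], and since tangent lines lie below convex functions, the
   same [y] minimises the [al]-problem for [f1] and the [be]-problem for [f2]: the infima add up. *)

Definition nondecreasing (g : R -> R) : Prop :=
  forall a b, a <= b -> g a <= g b.

Definition tangents_below (g dg : R -> R) : Prop :=
  forall z w, g z + dg z * (w - z) <= g w.

Lemma continuity_antiderivative (h : R -> R) : continuity h ->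
  exists F, forall x, derivable_pt_lim F x (h x).
Proof.
intros Hc. exists (RInt h 0). intros x.
apply is_derive_Reals, (is_derive_RInt h (RInt h 0) 0).
- apply filter_forall. intros b. apply (RInt_correct h 0 b).
  apply (ex_RInt_continuous h 0 b). intros z _. apply continuity_pt_filterlim, Hc.
- apply continuity_pt_filterlim, Hc.
Qed.

Lemma affine_quotient_deriv x t y :
  derivable_pt_lim (fun z => (x - z) / t) y (- / t).
Proof.
replace (- / t) with ((0 - 1) / t) by (unfold Rdiv; ring).
apply (derivable_pt_lim_div_scal (fct_cte x - id)%F).
apply derivable_pt_lim_minus; [apply derivable_pt_lim_const | apply derivable_pt_lim_id].
Qed.

Lemma convex_tangents_below (g dg : R -> R) : convex g ->
  (forall x, derivable_pt_lim g x (dg x)) -> tangents_below g dg.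
Proof.
intros Hc Hd x y.
destruct (Req_dec y x) as [->|Hyx]; [lra|].
destruct (Rle_lt_dec (g x + dg x * (y - x)) (g y)) as [H|H]; [exact H|exfalso].
set (gap := g x + dg x * (y - x) - g y).
assert (Hay : 0 < Rabs (y - x)) by (apply Rabs_pos_lt; lra).
destruct (Hd x (gap / Rabs (y - x))) as [del Hdel].
{ apply Rdiv_lt_0_compat; unfold gap; lra. }
pose proof (cond_pos del) as Hdel0.
set (l := Rmin 1 (del / (2 * Rabs (y - x)))).
assert (Hl0 : 0 < l).
{ apply Rmin_glb_lt; [lra|]. apply Rdiv_lt_0_compat; lra. }
assert (Hl1 : l <= 1) by apply Rmin_l.
set (h := l * (y - x)).
assert (Hh0 : h <> 0) by (apply Rmult_integral_contrapositive; split; lra).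
assert (Hhdel : Rabs h < del).
{ unfold h. rewrite Rabs_mult, (Rabs_right l) by lra.
  assert (l * Rabs (y - x) <= del / 2); [|lra].
  apply Rmult_le_reg_r with (/ Rabs (y - x)); [apply Rinv_0_lt_compat; lra|].
  replace (l * Rabs (y - x) * / Rabs (y - x)) with l by (field; lra).
  replace (del / 2 * / Rabs (y - x)) with (del / (2 * Rabs (y - x))) by (field; lra).
  apply Rmin_r. }
specialize (Hdel h Hh0 Hhdel).
set (q := (g (x + h) - g x) / h) in Hdel.
(* Convexity bounds the difference quotient at [h] by the chord slope, which lies [gap] below [dg x]. *)
assert (Hchord : q * (y - x) <= g y - g x).
{ pose proof (Hc y x l (conj (Rlt_le _ _ Hl0) Hl1)) as Hconv.
  replace (l * y + (1 - l) * x) with (x + h) in Hconv by (unfold h; ring).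
  apply Rmult_le_reg_l with l; [lra|].
  replace (l * (q * (y - x))) with (g (x + h) - g x) by (unfold q, h; field; lra).
  lra. }
assert (Hclose : Rabs ((q - dg x) * (y - x)) < gap).
{ rewrite Rabs_mult.
  apply Rmult_lt_compat_r with (r := Rabs (y - x)) in Hdel; [|lra].
  replace (gap / Rabs (y - x) * Rabs (y - x)) with gap in Hdel by (field; lra).
  exact Hdel. }
apply Rabs_def2 in Hclose. unfold gap in Hclose. nra.
Qed.

Lemma tangents_below_nondecreasing (g dg : R -> R) :
  tangents_below g dg -> nondecreasing dg.
Proof.
intros H a b Hab. destruct (Req_dec a b) as [->|Hne]; [lra|].
pose proof (H a b); pose proof (H b a). nra.
Qed.

Lemma nondecreasing_tangents_below (g dg : R -> R) :
  (forall x, derivable_pt_lim g x (dg x)) -> nondecreasing dg -> tangents_below g dg.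
Proof.
intros Hd Hm z w.
destruct (Rtotal_order z w) as [H|[<-|H]]; [|lra|].
- destruct (MVT_cor2 g dg z w H (fun c _ => Hd c)) as [c [Hc1 Hc2]].
  assert (dg z <= dg c) by (apply Hm; lra). nra.
- destruct (MVT_cor2 g dg w z H (fun c _ => Hd c)) as [c [Hc1 Hc2]].
  assert (dg c <= dg z) by (apply Hm; lra). nra.
Qed.

Lemma tangents_below_convex (g dg : R -> R) : tangents_below g dg -> convex g.
Proof.
intros H x y l Hl. set (z := l * x + (1 - l) * y).
pose proof (H z x); pose proof (H z y).
assert (l * (dg z * (x - z)) + (1 - l) * (dg z * (y - z)) = 0) by (unfold z; ring).
assert (l * (g z + dg z * (x - z)) <= l * g x) by (apply Rmult_le_compat_l; lra).
assert ((1 - l) * (g z + dg z * (y - z)) <= (1 - l) * g y) by (apply Rmult_le_compat_l; lra).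
lra.
Qed.

Lemma deriv_nondecreasing_convex (g dg : R -> R) :
  (forall x, derivable_pt_lim g x (dg x)) -> nondecreasing dg -> convex g.
Proof.
intros Hd Hm. exact (tangents_below_convex g dg (nondecreasing_tangents_below g dg Hd Hm)).
Qed.

Lemma deriv_sum (a b c da db dc : R -> R) :
  (forall x, a x + b x = c x) ->
  (forall x, derivable_pt_lim a x (da x)) -> (forall x, derivable_pt_lim b x (db x)) ->
  (forall x, derivable_pt_lim c x (dc x)) -> forall x, dc x = da x + db x.
Proof.
intros Hsum Ha Hb Hc x. apply (uniqueness_limite c x); [apply Hc|].
apply (derivable_pt_lim_ext (a + b)%F); [exact Hsum|].
apply derivable_pt_lim_plus; auto.
Qed.

Lemma nondecreasing_continuity (p : R -> R) :
  nondecreasing p -> nondecreasing (fun v => v - p v) -> continuity p.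
Proof.
intros Hp Hq x eps Heps. exists eps. split; [exact Heps|].
intros y [_ Hy]. simpl in *. unfold R_dist in *. eapply Rle_lt_trans; [|exact Hy].
destruct (Rle_dec x y) as [Hxy|Hxy].
- pose proof (Hp x y Hxy); pose proof (Hq x y Hxy).
  rewrite !Rabs_right by lra. lra.
- pose proof (Hp y x ltac:(lra)); pose proof (Hq y x ltac:(lra)).
  rewrite !Rabs_left1 by lra. lra.
Qed.

Section Transfer.

Variables da db dth : R -> R.
Hypothesis da_mono : nondecreasing da.
Hypothesis db_mono : nondecreasing db.
Hypothesis dth_sum : forall s, dth s = da s + db s.

(* [psi s v = min (da s) (v - db s)]; at [v = dth s0] its supremum is squeezed to [da s0] by
   monotonicity of [da] (for [s <= s0]) and of [db] (for [s >= s0]). *)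
Let psi s v := da s - Rmax 0 (dth s - v).

Let psi_bounded v : bound (fun r => exists s, r = psi s v).
Proof.
exists (Rmax (v - db 0) (da 0)). intros r [s ->]. unfold psi.
pose proof (Rmax_l (v - db 0) (da 0)); pose proof (Rmax_r (v - db 0) (da 0)).
pose proof (Rmax_l 0 (dth s - v)); pose proof (Rmax_r 0 (dth s - v)).
destruct (Rle_dec 0 s) as [Hs|Hs].
- pose proof (db_mono 0 s Hs). rewrite dth_sum in *. lra.
- pose proof (da_mono s 0 ltac:(lra)). lra.
Qed.

Let psi_le_critical s s0 : psi s (dth s0) <= da s0.
Proof.
unfold psi. pose proof (Rmax_l 0 (dth s - dth s0)); pose proof (Rmax_r 0 (dth s - dth s0)).
destruct (Rle_dec s s0) as [Hs|Hs].
- pose proof (da_mono s s0 Hs). lra.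
- pose proof (db_mono s0 s ltac:(lra)). rewrite !dth_sum in *. lra.
Qed.

Lemma transfer_exists : exists phi : R -> R,
  nondecreasing phi /\ nondecreasing (fun v => v - phi v) /\
  forall s, phi (dth s) = da s.
Proof.
set (phi := fun v => proj1_sig (completeness _ (psi_bounded v) (ex_intro _ _ (ex_intro _ 0 eq_refl)))).
assert (Hub : forall s v, psi s v <= phi v).
{ intros s v. apply (proj1 (proj2_sig (completeness _ (psi_bounded v) _))). exists s; reflexivity. }
assert (Hlub : forall v M, (forall s, psi s v <= M) -> phi v <= M).
{ intros v M HM. apply (proj2 (proj2_sig (completeness _ (psi_bounded v) _))).
  intros r [s ->]. apply HM. }
exists phi. split; [|split].
- intros v w Hvw. apply Hlub. intros s. eapply Rle_trans; [|apply (Hub s w)].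
  unfold psi, Rmax. destruct (Rle_dec 0 (dth s - v)), (Rle_dec 0 (dth s - w)); lra.
- intros v w Hvw. enough (phi w <= phi v + (w - v)) by lra.
  apply Hlub. intros s. pose proof (Hub s v) as Hs. unfold psi, Rmax in *.
  destruct (Rle_dec 0 (dth s - v)), (Rle_dec 0 (dth s - w)); lra.
- intros s0. apply Rle_antisym.
  + apply Hlub. intros s. apply psi_le_critical.
  + replace (da s0) with (psi s0 (dth s0)); [apply Hub|].
    unfold psi. rewrite Rminus_diag, Rmax_left by lra. ring.
Qed.

End Transfer.

Lemma hopf_lax_at_tangency (g dg c dc : R -> R) t x y : 0 < t ->
  tangents_below g dg -> tangents_below c dc -> (forall z, c (- z) = c z) ->
  dg y = dc ((x - y) / t) ->
  hopf_lax_is c t g x (g y + t * c ((y - x) / t)).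
Proof.
intros Ht Tg Tc Hc Hy. split.
- intros v [w ->]. set (s := (x - y) / t).
  assert (Ey : c ((y - x) / t) = c s) by (rewrite <- Hc; f_equal; unfold s; field; lra).
  assert (Ew : c ((w - x) / t) = c ((x - w) / t)) by (rewrite <- Hc; f_equal; field; lra).
  rewrite Ey, Ew.
  pose proof (Tg y w) as Hg. pose proof (Tc s ((x - w) / t)) as Hcs.
  assert (t * (dc s * ((x - w) / t - s)) = dc s * (y - w)) by (unfold s; field; lra).
  apply Rmult_le_compat_l with (r := t) in Hcs; [|lra].
  rewrite Rmult_plus_distr_l in Hcs. rewrite Hy in Hg. fold s in Hg. lra.
- intros m Hm. apply Hm. exists y. reflexivity.
Qed.

Lemma cost_pos (th : R -> R) : cost_function th -> strictly_convex th ->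
  forall u, u <> 0 -> 0 < th u.
Proof.
intros [Hev [_ [_ H0]]] Hs u Hu.
pose proof (Hs u (- u) (1 / 2) ltac:(lra) ltac:(lra)) as H.
replace (1 / 2 * u + (1 - 1 / 2) * - u) with 0 in H by field.
rewrite Hev, H0 in H. lra.
Qed.

Lemma cost_linear_growth (th : R -> R) : convex th -> th 0 = 0 ->
  forall u, 1 <= u -> u * th 1 <= th u.
Proof.
intros Hc H0 u Hu.
pose proof (Hc u 0 (/ u) ltac:(split; [left; apply Rinv_0_lt_compat; lra | rewrite <- Rinv_1; apply Rinv_le_contravar; lra]))
  as H.
replace (/ u * u + (1 - / u) * 0) with 1 in H by (field; lra).
rewrite H0, Rmult_0_r, Rplus_0_r in H.
apply Rmult_le_compat_l with (r := u) in H; [|lra].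
replace (u * (/ u * th u)) with (th u) in H by (field; lra). exact H.
Qed.

Lemma deriv_zero_interior_min (g dg : R -> R) a b c :
  (forall x, derivable_pt_lim g x (dg x)) -> a < c < b -> g c < g a -> g c < g b ->
  exists y, dg y = 0.
Proof.
intros Hd Hc Ha Hb.
assert (Hcont : forall x, a <= x <= b -> continuity_pt g x)
  by (intros x _; exact (derivable_continuous_pt g x (exist _ _ (Hd x)))).
destruct (continuity_ab_min g a b ltac:(lra) Hcont) as [y [Hmin Hy]].
pose proof (Hmin c ltac:(lra)).
assert (Hay : a < y) by (destruct (Req_dec a y); subst; lra).
assert (Hyb : y < b) by (destruct (Req_dec y b); subst; lra).
exists y. set (pr := exist (fun l => derivable_pt_abs g y l) (dg y) (Hd y)).
change (dg y) with (derive_pt g y pr).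
apply (deriv_minimum g a b y pr Hay Hyb). intros; apply Hmin; lra.
Qed.

Lemma hopf_lax_critical_point (th dth f df : R -> R) t x :
  cost_function th -> 0 < th 1 -> (forall s, derivable_pt_lim th s (dth s)) ->
  (forall y, derivable_pt_lim f y (df y)) -> bounded_below f -> 0 < t ->
  exists y, df y = dth ((x - y) / t).
Proof.
intros [Hev [Hc [_ H0]]] Hth1 Hdth Hdf [m Hm] Ht.
set (F := fun y => f y + t * th ((x - y) / t)).
assert (HF : forall y, derivable_pt_lim F y (df y - dth ((x - y) / t))).
{ intros y. replace (df y - dth ((x - y) / t)) with (df y + t * (dth ((x - y) / t) * - / t))
    by (field; lra).
  apply derivable_pt_lim_plus; [apply Hdf|].
  apply derivable_pt_lim_scal.
  apply (derivable_pt_lim_comp (fun z => (x - z) / t) th); [apply affine_quotient_deriv | apply Hdth]. }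
set (r := Rmax t ((f x - m) / th 1 + 1)).
assert (Htr : t <= r) by apply Rmax_l.
assert (Hrt : 1 <= r / t).
{ apply (Rmult_le_reg_r t); [lra|]. unfold Rdiv. rewrite Rmult_assoc, Rinv_l by lra. lra. }
assert (Hr : f x - m < r * th 1).
{ assert ((f x - m) / th 1 + 1 <= r) by apply Rmax_r.
  apply Rlt_le_trans with (((f x - m) / th 1 + 1) * th 1);
    [field_simplify; lra | apply Rmult_le_compat_r; lra]. }
(* Linear growth of [th] makes [F] exceed [F x = f x] at distance [r] from [x]. *)
assert (Hfar : forall y, th ((x - y) / t) = th (r / t) -> F x < F y).
{ intros y Hy. unfold F. rewrite Hy. replace ((x - x) / t) with 0 by (field; lra). rewrite H0.
  pose proof (cost_linear_growth th Hc H0 _ Hrt).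
  assert (t * (r / t * th 1) <= t * th (r / t)) by (apply Rmult_le_compat_l; lra).
  replace (t * (r / t * th 1)) with (r * th 1) in * by (field; lra).
  pose proof (Hm y). lra. }
destruct (deriv_zero_interior_min F _ (x - r) (x + r) x HF) as [y Hy].
- lra.
- apply Hfar. f_equal. field. lra.
- apply Hfar. rewrite <- Hev. f_equal. field. lra.
- exists y. lra.
Qed.

Theorem proposition2p4
  (al be th da db dth f df : R -> R)
  (Hal : cost_function al) (Hbe : cost_function be) (Hth : cost_function th)
  (Hda : C1_with al da) (Hdb : C1_with be db) (Hdth : C1_with th dth)
  (Hsum : forall x, al x + be x = th x)
  (Hstrict : strictly_convex th)
  (Hfconv : convex f) (Hdf : C1_with f df) (Hfbd : bounded_below f) :
  exists f1 f2 df1 df2 : R -> R,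
    convex f1 /\ convex f2 /\ C1_with f1 df1 /\ C1_with f2 df2 /\
    (forall x, f x = f1 x + f2 x) /\
    (forall t, 0 < t -> forall x, exists m1 m2,
        hopf_lax_is al t f1 x m1 /\ hopf_lax_is be t f2 x m2 /\
        hopf_lax_is th t f x (m1 + m2)) /\
    (forall x s, dth s = df x -> df1 x = da s).
Proof.
destruct Hal as [Eal [Cal _]], Hbe as [Ebe [Cbe _]], (Hth) as [Eth [Cth _]].
destruct Hda as [Hda _], Hdb as [Hdb _], Hdth as [Hdth _], Hdf as [Hdf Hdf_cont].
pose proof (deriv_sum al be th da db dth Hsum Hda Hdb Hdth) as Hdsum.
pose proof (convex_tangents_below al da Cal Hda) as Tal.
pose proof (convex_tangents_below be db Cbe Hdb) as Tbe.
pose proof (convex_tangents_below th dth Cth Hdth) as Tth.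
pose proof (convex_tangents_below f df Hfconv Hdf) as Tf.
destruct (transfer_exists da db dth (tangents_below_nondecreasing _ _ Tal)
  (tangents_below_nondecreasing _ _ Tbe) Hdsum) as [phi [Hphi [Hphi' Hphi_dth]]].
set (df1 := fun x => phi (df x)).
assert (Hdf1_cont : continuity df1)
  by exact (continuity_comp df phi Hdf_cont (nondecreasing_continuity phi Hphi Hphi')).
destruct (continuity_antiderivative df1 Hdf1_cont) as [f1 Hdf1].
set (df2 := fun x => df x - df1 x).
assert (Hdf2 : forall x, derivable_pt_lim (fun y => f y - f1 y) x (df2 x))
  by (intro x; exact (derivable_pt_lim_minus f f1 x _ _ (Hdf x) (Hdf1 x))).
assert (Mdf1 : nondecreasing df1)
  by (intros a b Hab; apply Hphi, (tangents_below_nondecreasing _ _ Tf), Hab).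
assert (Mdf2 : nondecreasing df2)
  by (intros a b Hab; apply (Hphi' (df a) (df b)), (tangents_below_nondecreasing _ _ Tf), Hab).
exists f1, (fun x => f x - f1 x), df1, df2.
split; [exact (deriv_nondecreasing_convex _ _ Hdf1 Mdf1)|].
split; [exact (deriv_nondecreasing_convex _ _ Hdf2 Mdf2)|].
split; [split; assumption|].
split; [split; [assumption | exact (continuity_minus _ _ Hdf_cont Hdf1_cont)]|].
split; [intro x; ring|].
split; [|intros x s Hs; unfold df1; rewrite <- Hs; apply Hphi_dth].
intros t Ht x.
destruct (hopf_lax_critical_point th dth f df t x Hth
  (cost_pos th Hth Hstrict 1 ltac:(lra)) Hdth Hdf Hfbd Ht) as [y Hy].
exists (f1 y + t * al ((y - x) / t)), (f y - f1 y + t * be ((y - x) / t)).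
split; [|split].
- apply (hopf_lax_at_tangency f1 df1 al da); auto using Eal, nondecreasing_tangents_below.
  unfold df1. rewrite Hy. apply Hphi_dth.
- apply (hopf_lax_at_tangency (fun z => f z - f1 z) df2 be db); auto using Ebe, nondecreasing_tangents_below.
  unfold df2, df1. rewrite Hy, Hphi_dth, Hdsum. ring.
- replace (f1 y + t * al ((y - x) / t) + (f y - f1 y + t * be ((y - x) / t)))
    with (f y + t * th ((y - x) / t)) by (rewrite <- Hsum; ring).
  apply (hopf_lax_at_tangency f df th dth); auto using Eth.
Qed.
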